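(* Let $G=(V,E)$ be a finite simple strongly connected directed graph with a fixed total order on $V$, let $W\subseteq V$ be strongly connected and $w\in W$. For each spanning tree $\mathbf b$ rooted at $w$ with $\psi(\mathbf b)=W$, define the formal signed combination of forests rooted in $W$ $$\nu_{\mathbf b}=\sum_{\mathfrak F\subseteq\mathfrak E_{\mathbf b}}(-1)^{|\mathfrak F|}\,\delta_{\mathbf f_{\mathfrak F}},$$ with $\mathfrak E_{\mathbf b}$ and $\mathbf f_{\mathfrak F}$ as below. Then the family $(\nu_{\mathbf b})$, indexed by all spanning trees $\mathbf b$ rooted at $w$ with $\psi(\mathbf b)=W$, is linearly independent in the vector space with basis $\{\delta_{\mathbf f}\}$ indexed by forests of $G$ rooted in $W$.
   Context: A spanning tree of $G$ is a subgraph on all vertices with no cycle, one vertex (root) of outdegree $0$ and all others of outdegree $1$. For nonempty $U\subseteq V$, a forest rooted in $U$ is a subgraph on all vertices with no cycle in which vertices of $U$ have outdegree $0$ and all others outdegree $1$. Exploration algorithm (depends on the fixed total order of $V$). Input: a spanning tree $\mathbf a$ rooted at $v$. Initialize $A=\{v\}$, $F=\{e: s(e)\neq v\}$, $\mathbf L$ = FIFO list of edges with target $v$, by increasing source. While $\mathbf L$ is nonempty, take its first edge $e$, with source $u$: if $e\in\mathbf a$, add $u$ to $A$, delete from $\mathbf L$ (and $F$) all edges with source $u$, and append to $\mathbf L$ all edges of $F$ with target $u$ by increasing source; otherwise delete from $\mathbf L$ and $F$ all edges with source or target $u$, and $u$ is said to be erased by the edge $e$. At the end $\phi(\mathbf a)=A$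 and $\psi(\mathbf a)$ is the strongly connected component of $v$ in the induced graph $G_{\phi(\mathbf a)}$. For a tree $\mathbf b$ as in the claim: $\mathbf f$ is the set of edges of $\mathbf b$ whose source is not in $W$; $\mathfrak E_{\mathbf b}$ is the set of vertices erased when running the algorithm on $\mathbf b$; for $u\in\mathfrak E_{\mathbf b}$, $e(u)$ is the edge that erased $u$; for $\mathfrak F\subseteq\mathfrak E_{\mathbf b}$, $\mathbf f_{\mathfrak F}$ is obtained from $\mathbf f$ by replacing, for each $u\in\mathfrak F$, the edge of $\mathbf f$ going out of $u$ by $e(u)$ (it is a forest rooted in $W$). *)

(* Vertex set V = 'I_n, totally ordered by the natural order on ordinals. *)
From HB Require Import structures.
From mathcomp Require Import all_boot all_order all_algebra.
Set Implicit Arguments. Unset Strict Implicit. Unset Printing Implicit Defensive.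
Import Order.TTheory GRing.Theory Num.Theory.

Definition edge_set n (E : rel 'I_n) : {set 'I_n * 'I_n} := [set e | E e.1 e.2].

Definition induced n (E : rel 'I_n) (A : {set 'I_n}) : rel 'I_n :=
  fun x y => [&& E x y, x \in A & y \in A].

Definition strongly_connected n (E : rel 'I_n) : bool :=
  [forall x, forall y, connect E x y].

Definition strongly_connected_set n (E : rel 'I_n) (W : {set 'I_n}) : bool :=
  [forall x in W, forall y in W, connect (induced E W) x y].

Definition outdeg n (a : {set 'I_n * 'I_n}) (x : 'I_n) : nat :=
  #|[set e in a | e.1 == x]|.

Definition edge_rel n (a : {set 'I_n * 'I_n}) : rel 'I_n := fun x y => (x, y) \in a.

Definition acyclic n (a : {set 'I_n * 'I_n}) : bool :=
  [forall e in a, ~~ connect (edge_rel a) e.2 e.1].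

Definition rooted_forest n (E : rel 'I_n) (U : {set 'I_n}) (a : {set 'I_n * 'I_n}) : bool :=
  [&& a \subset edge_set E,
      [forall x in U, outdeg a x == 0%N],
      [forall x in ~: U, outdeg a x == 1%N] & acyclic a].

Definition spanning_tree n (E : rel 'I_n) (v : 'I_n) (a : {set 'I_n * 'I_n}) : bool :=
  rooted_forest E [set v] a.

(* State of the exploration algorithm:
   A, F, the FIFO list L, and the list of (erased vertex, erasing edge). *)
Record xstate n := XState {
  stA : {set 'I_n};
  stF : {set 'I_n * 'I_n};
  stL : seq ('I_n * 'I_n);
  stEr : seq ('I_n * ('I_n * 'I_n)) }.

Definition xstep n (a : {set 'I_n * 'I_n}) (s : xstate n) : xstate n :=
  match stL s with
  | [::] => s
  | e :: L' =>
    let u := e.1 in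
    if e \in a then
      let F' := [set f in stF s | f.1 != u] in
      XState (u |: stA s) F'
        ([seq f <- L' | f.1 != u] ++ [seq (x, u) | x <- enum 'I_n & (x, u) \in F'])
        (stEr s)
    else
      XState (stA s) [set f in stF s | (f.1 != u) && (f.2 != u)]
        [seq f <- L' | (f.1 != u) && (f.2 != u)]
        ((u, e) :: stEr s)
  end.

Definition xinit n (E : rel 'I_n) (v : 'I_n) : xstate n :=
  XState [set v] [set e | E e.1 e.2 && (e.1 != v)]
    [seq (x, v) | x <- enum 'I_n & E x v] [::].

(* Each iteration removes at least one edge from L and at most n^2 edges are ever
   inserted, so n^2 + 1 iterations reach the end of the algorithm. *)
Definition explore n (E : rel 'I_n) (v : 'I_n) (a : {set 'I_n * 'I_n}) : xstate n :=
  iter (n ^ 2).+1 (xstep a) (xinit E v).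

Definition phi n (E : rel 'I_n) (v : 'I_n) (a : {set 'I_n * 'I_n}) : {set 'I_n} :=
  stA (explore E v a).

Definition psi n (E : rel 'I_n) (v : 'I_n) (a : {set 'I_n * 'I_n}) : {set 'I_n} :=
  let A := phi E v a in
  [set x in A | connect (induced E A) v x && connect (induced E A) x v].

Definition erased n (E : rel 'I_n) (v : 'I_n) (a : {set 'I_n * 'I_n}) : {set 'I_n} :=
  [set u | u \in [seq p.1 | p <- stEr (explore E v a)]].

Definition erasing_edge n (E : rel 'I_n) (v : 'I_n) (a : {set 'I_n * 'I_n}) (u : 'I_n)
  : 'I_n * 'I_n :=
  head (u, u) [seq p.2 | p <- stEr (explore E v a) & p.1 == u].

Definition forest_f n (W : {set 'I_n}) (b : {set 'I_n * 'I_n}) : {set 'I_n * 'I_n} :=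
  [set e in b | e.1 \notin W].

Definition forest_fF n (E : rel 'I_n) (w : 'I_n) (W : {set 'I_n})
  (b : {set 'I_n * 'I_n}) (Fr : {set 'I_n}) : {set 'I_n * 'I_n} :=
  [set e in forest_f W b | e.1 \notin Fr] :|: [set erasing_edge E w b u | u in Fr].

(* coefficient of delta_f in nu_b *)
Definition nu (R : numFieldType) n (E : rel 'I_n) (w : 'I_n) (W : {set 'I_n})
  (b : {set 'I_n * 'I_n}) (f : {set 'I_n * 'I_n}) : R :=
  (\sum_(Fr : {set 'I_n} | (Fr \subset erased E w b) && (forest_fF E w W b Fr == f))
     (-1) ^+ #|Fr|)%R.

(* The exploration of a tree b with psi(b) = W never discards an edge whose
   source lies in W, so it coincides with the exploration of the graph
   f(b) + (all edges leaving W), where f(b) is the part of b outside W.  Record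
   the run as the word of keep/discard decisions, read as a binary number: the
   key of f.  For a nonempty set F of erased vertices the runs on f(b) and on
   f_F agree until the first vertex of F comes up, where f(b) discards the edge
   and f_F keeps it; hence key(f(b)) < key(f_F).  So nu_b is supported on
   f(b) and forests of larger key, with coefficient 1 at f(b); the same agreement
   shows that b is recovered from f(b).  The family is therefore triangular with
   respect to the key, hence linearly independent. *)
From HB Require Import structures.
From mathcomp Require Import all_boot all_order all_algebra.
Import Order.TTheory GRing.Theory Num.Theory.
Set Implicit Arguments. Unset Strict Implicit. Unset Printing Implicit Defensive.

Lemma exists_switch (P : nat -> bool) N :
  ~~ P 0 -> P N -> exists k, [/\ k < N, ~~ P k & P k.+1].
Proof.
elim: N => [|N IH] P0 PN; first by rewrite PN in P0.
have [PN'|] := boolP (P N); last by exists N.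
by have [k [kN Pk Pk1]] := IH P0 PN'; exists k; split => //; apply: ltnW.
Qed.

Lemma head_filter_uniq (T U : eqType) (s : seq (T * U)) u e d :
  uniq (map fst s) -> (u, e) \in s -> head d [seq p.2 | p <- s & p.1 == u] = e.
Proof.
elim: s => [|p s IH] //= /andP[pn us]; rewrite inE => /orP[/eqP <-|ues] /=.
  by rewrite eqxx.
case: ifP => [/eqP pu|_]; last exact: IH.
by move: pn; rewrite pu; case/negP; apply/mapP; exists (u, e).
Qed.

Fixpoint nat_of_bits (s : seq bool) : nat :=
  if s is b :: s' then b * 2 ^ size s' + nat_of_bits s' else 0.

Lemma nat_of_bits_lt s : nat_of_bits s < 2 ^ size s.
Proof.
elim: s => [|[] s IH] //=; rewrite expnS mul2n -addnn ?mul1n ?mul0n ?add0n.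
  by rewrite ltn_add2l.
exact: ltn_addr.
Qed.

Lemma nat_of_bits_cat_lt p s t :
  size s = size t -> nat_of_bits (p ++ false :: s) < nat_of_bits (p ++ true :: t).
Proof.
move=> st; elim: p => [|b p IH] /=.
  by rewrite mul0n add0n mul1n -st ltn_addr // nat_of_bits_lt.
by rewrite !size_cat /= st ltn_add2l.
Qed.

Lemma nat_of_bits_map_lt (d1 d2 : nat -> bool) k N :
  k < N -> (forall i, i < k -> d1 i = d2 i) -> d1 k = false -> d2 k = true ->
  nat_of_bits (map d1 (iota 0 N)) < nat_of_bits (map d2 (iota 0 N)).
Proof.
move=> kN d12 d1k d2k.
have -> : N = k + (N - k.+1).+1 by rewrite -addSnnS subnKC.
rewrite iotaD /= add0n !map_cat /= d1k d2k.
have -> : map d1 (iota 0 k) = map d2 (iota 0 k).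
  by apply/eq_in_map => i; rewrite mem_iota add0n => /d12.
by apply: nat_of_bits_cat_lt; rewrite !size_map.
Qed.

Section Trees.
Variables (n : nat) (E : rel 'I_n) (w : 'I_n).
Implicit Types (a b : {set 'I_n * 'I_n}) (e : 'I_n * 'I_n) (u : 'I_n).

Lemma outdeg0_notin a u e : outdeg a u = 0 -> e.1 = u -> e \notin a.
Proof.
move=> /eqP; rewrite cards_eq0 => /eqP a_u e1; apply/negP => ea.
have : e \in [set e in a | e.1 == u] by rewrite inE ea e1 eqxx.
by rewrite a_u inE.
Qed.

Lemma outdeg1_mem a u e0 e :
  outdeg a u = 1 -> e0 \in a -> e0.1 = u -> e.1 = u -> (e \in a) = (e == e0).
Proof.
move=> /eqP/cards1P [x a_u] e0a e01 e1.
have out_u f : (f \in a) && (f.1 == u) = (f == x) by rewrite -[f == x]in_set1 -a_u inE.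
have /eqP e0x : e0 == x by rewrite -out_u e0a e01 eqxx.
by apply/idP/eqP => [ea|->//]; apply/eqP; rewrite e0x -out_u ea e1 eqxx.
Qed.

Lemma outdeg_root b : spanning_tree E w b -> outdeg b w = 0.
Proof. by case/and4P => _ /forall_inP root_w _ _; apply/eqP/root_w; rewrite inE. Qed.

Lemma outdeg_nonroot b u : spanning_tree E w b -> u != w -> outdeg b u = 1.
Proof. by case/and4P => _ _ /forall_inP out_u _ uw; apply/eqP/out_u; rewrite !inE. Qed.

Lemma forest_f_rooted (W : {set 'I_n}) b :
  spanning_tree E w b -> w \in W -> rooted_forest E W (forest_f W b).
Proof.
move=> sb wW; have /and4P [sub _ _ /forall_inP acy] := sb.
have fb : forest_f W b \subset b by apply/subsetP => e; rewrite inE => /andP[].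
apply/and4P; split.
- exact: subset_trans sub.
- apply/forall_inP => x xW; rewrite /outdeg cards_eq0; apply/eqP/setP => e.
  by rewrite !inE; apply/negP => /andP[/andP[_ +] /eqP ex]; rewrite ex xW.
- apply/forall_inP => x; rewrite inE => xW.
  have xw : x != w by apply: contraNneq xW => ->.
  rewrite -(outdeg_nonroot sb xw) /outdeg; apply/eqP/eq_card => e; rewrite !inE.
  by apply/andP/andP => [[/andP[]]|[eb /eqP ex]] //; rewrite eb ex xW.
- apply/forall_inP => e ef; apply: contra (acy e (subsetP fb _ ef)).
  by apply: connect_sub => x y xy; apply: connect1; rewrite /edge_rel (subsetP fb _ xy).
Qed.

End Trees.

Section ExplorationStep.
Variable n : nat.
Implicit Types (a : {set 'I_n * 'I_n}) (s : xstate n).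

Definition erased_seq s : seq 'I_n := [seq p.1 | p <- stEr s].

(* Erased vertices never enter A and keep no edge of F, so each is erased once,
   by an edge leaving it. *)
Definition explore_inv s : Prop :=
  [/\ {subset stL s <= stF s},
      forall e, e \in stF s -> e.1 \notin stA s,
      forall p, p \in stEr s ->
        [/\ p.1 \notin stA s, forall e, e \in stF s -> e.1 != p.1 & p.2.1 = p.1]
    & uniq (erased_seq s)].

Lemma explore_inv_init (E : rel 'I_n) v : irreflexive E -> explore_inv (xinit E v).
Proof.
move=> irrE; split => //= [e /mapP [x]|e]; last by rewrite !inE => /andP[].
rewrite mem_filter mem_enum andbT => Exv ->; rewrite inE /= Exv /=.
by apply: contraTneq Exv => ->; rewrite irrE.
Qed.

Lemma explore_inv_step a s : explore_inv s -> explore_inv (xstep a s).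
Proof.
case: s => A F [|e L] Er [/= HL HF HE HU] //; rewrite /xstep /=.
have eF : e \in F by apply: HL; rewrite inE eqxx.
case: ifP => ea; split => //=.
- move=> f; rewrite mem_cat => /orP[|/mapP [x]]; last by rewrite mem_filter => /andP[+ _] ->.
  by rewrite mem_filter inE => /andP[-> fL]; rewrite HL // inE fL orbT.
- by move=> f; rewrite inE => /andP[fF fu]; rewrite in_setU1 negb_or fu HF.
- move=> p pEr; have [pA pF p21] := HE _ pEr; split => // [|f].
    by rewrite in_setU1 negb_or pA andbT; apply: contra_neq (pF _ eF) => ->.
  by rewrite inE => /andP[/pF].
- move=> f; rewrite mem_filter => /andP[/andP[f1 f2] fL].
  by rewrite inE f1 f2 HL // inE fL orbT.
- by move=> f; rewrite inE => /andP[/HF].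
- move=> p; rewrite inE => /orP[/eqP -> /=|pEr].
    by split => // [|f]; [apply: HF | rewrite inE => /and3P[]].
  by have [pA pF p21] := HE _ pEr; split => // f; rewrite inE => /andP[/pF].
- rewrite HU andbT; apply/mapP => -[p pEr /= ep]; have [_ pF _] := HE _ pEr.
  by move: (pF _ eF); rewrite ep eqxx.
Qed.

Lemma stA_xstep a s :
  stA (xstep a s) = if stL s is e :: _ then (if e \in a then e.1 |: stA s else stA s)
                    else stA s.
Proof. by case: s => A F [|e L] Er //=; rewrite /xstep /=; case: ifP. Qed.

Lemma stEr_xstep a s :
  stEr (xstep a s) = if stL s is e :: _ then (if e \in a then stEr s else (e.1, e) :: stEr s)
                     else stEr s.
Proof. by case: s => A F [|e L] Er //=; rewrite /xstep /=; case: ifP. Qed.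

Lemma xstep_agree a a' s :
  (forall e L, stL s = e :: L -> (e \in a) = (e \in a')) -> xstep a s = xstep a' s.
Proof. by case: s => A F [|e L] Er // aa'; rewrite /xstep /= (aa' e L). Qed.

Lemma xstep_enters a s u : u \notin stA s -> u \in stA (xstep a s) ->
  exists e L, [/\ stL s = e :: L, e \in a & e.1 = u].
Proof.
rewrite stA_xstep; case: (stL s) => [|e L] uA; first by rewrite (negbTE uA).
case: ifP => ea; last by rewrite (negbTE uA).
by rewrite in_setU1 (negbTE uA) orbF => /eqP eu; exists e, L.
Qed.

Lemma xstep_erases a s u : u \notin erased_seq s -> u \in erased_seq (xstep a s) ->
  exists e L, [/\ stL s = e :: L, e \notin a & e.1 = u].
Proof.
rewrite /erased_seq stEr_xstep; case: (stL s) => [|e L] uEr; first by rewrite (negbTE uEr).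
case: ifP => ea; first by rewrite (negbTE uEr).
by rewrite inE (negbTE uEr) orbF => /eqP eu; exists e, L; rewrite ea.
Qed.

Definition head_kept a s : bool := if stL s is e :: _ then e \in a else false.

End ExplorationStep.

Section Exploration.
Variables (n : nat) (E : rel 'I_n) (w : 'I_n).
Hypothesis irrE : irreflexive E.
Implicit Types (a b f : {set 'I_n * 'I_n}) (e : 'I_n * 'I_n) (u : 'I_n).
Local Notation N := (n ^ 2).+1.

Definition run a k := iter k (xstep a) (xinit E w).

Lemma runS a k : run a k.+1 = xstep a (run a k). Proof. by []. Qed.

Lemma explore_inv_run a k : explore_inv (run a k).
Proof. by elim: k => [|k IH]; [apply: explore_inv_init | apply: explore_inv_step]. Qed.

Lemma stA_run_mono a k m : k <= m -> stA (run a k) \subset stA (run a m).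
Proof.
move/subnK <-; elim: (m - k) => [|d IH]; first by rewrite add0n.
rewrite addSn runS; apply: subset_trans IH _; rewrite stA_xstep; case: stL => [|e L] //.
by case: ifP => // _; apply: subsetUr.
Qed.

Lemma stEr_run_mono a k m : k <= m -> {subset stEr (run a k) <= stEr (run a m)}.
Proof.
move/subnK <-; elim: (m - k) => [|d IH] p; first by rewrite add0n.
move/IH; rewrite addSn runS stEr_xstep.
by case: stL => [|e L] //; case: ifP => // _ pEr; rewrite inE pEr orbT.
Qed.

Lemma erased_notin_stA a k m p :
  p \in stEr (run a k) -> k <= m -> p.1 \notin stA (run a m).
Proof.
move=> pEr km; have [_ _ HE _] := explore_inv_run a m.
by have [] := HE p (stEr_run_mono km pEr).
Qed.

Lemma run_agree a a' K :
  (forall k, k < K -> forall e L, stL (run a k) = e :: L -> (e \in a) = (e \in a')) ->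
  forall k, k <= K -> run a k = run a' k.
Proof.
move=> aa'; elim=> [|k IH] // kK; rewrite !runS -IH; last exact: ltnW.
exact/xstep_agree/aa'.
Qed.

Lemma first_head_in a (Fr : {set 'I_n}) :
  Fr != set0 -> {subset Fr <= erased_seq (run a N)} ->
  exists k0 e0 L0, [/\ k0 < N, stL (run a k0) = e0 :: L0, e0.1 \in Fr &
    forall k e L, k < k0 -> stL (run a k) = e :: L -> e.1 \notin Fr].
Proof.
move=> /set0Pn [u uFr] FrEr.
pose Q k := (k < N) && (if stL (run a k) is e :: _ then e.1 \in Fr else false).
have exQ : exists k, Q k.
  have [k [kN uk uk1]] :=
    exists_switch (P := fun k => u \in erased_seq (run a k)) isT (FrEr u uFr).
  by have [e [L [Lk _ eu]]] := xstep_erases uk uk1; exists k; rewrite /Q kN Lk eu.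
have [k0 /andP[k0N]] := ex_minnP exQ.
case Lk0: (stL (run a k0)) => [|e0 L0] // e0Fr k0min.
exists k0, e0, L0; split => // k e L kk0 Lk; apply/negP => eFr.
by have := k0min k; rewrite /Q Lk eFr (ltn_trans kk0 k0N) leqNgt kk0 => /(_ isT).
Qed.

Lemma erased_head_notin a k e L : k < N -> stL (run a k) = e :: L ->
  e.1 \in erased_seq (run a N) -> e \notin a /\ (e.1, e) \in stEr (run a N).
Proof.
move=> kN Lk /mapP [p pEr pe]; have [ea|ea] := boolP (e \in a).
  have : e.1 \in stA (run a k.+1) by rewrite runS stA_xstep Lk ea in_setU1 eqxx.
  move/(subsetP (stA_run_mono a kN)).
  by rewrite pe (negbTE (erased_notin_stA pEr (leqnn _))).
by split => //; apply: (stEr_run_mono kN); rewrite runS stEr_xstep Lk (negbTE ea) inE eqxx.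
Qed.

Lemma psi_sub_stA b : psi E w b \subset stA (run b N).
Proof. by apply/subsetP => x; rewrite inE => /andP[]. Qed.

Lemma erasing_edge_explore b u e :
  (u, e) \in stEr (explore E w b) -> erasing_edge E w b u = e.
Proof. by apply: head_filter_uniq; have [] := explore_inv_run b N. Qed.

Lemma erasing_edge_src b u : u \in erased E w b -> (erasing_edge E w b u).1 = u.
Proof.
rewrite inE => /mapP [[v e] pEr /= ->]; rewrite (erasing_edge_explore pEr).
by have [_ _ HE _] := explore_inv_run b N; have [] := HE _ pEr.
Qed.

Variable W : {set 'I_n}.

Definition saturate f := f :|: [set e | e.1 \in W].

Definition key f :=
  nat_of_bits [seq head_kept (saturate f) (run (saturate f) i) | i <- iota 0 N].

Lemma run_saturate b k :
  psi E w b = W -> k <= N -> run b k = run (saturate (forest_f W b)) k.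
Proof.
move=> pW; apply: run_agree => {k} k kN e L Lk; rewrite !inE /=.
have [eW|] := boolP (e.1 \in W); last by rewrite andbT orbF.
rewrite orbT; apply/negPn/negP => eb.
have eEr : (e.1, e) \in stEr (run b k.+1) by rewrite runS stEr_xstep Lk (negbTE eb) inE eqxx.
by have := erased_notin_stA eEr kN; rewrite (subsetP (psi_sub_stA b)) // pW.
Qed.

Lemma saturate_forest_fF b (Fr : {set 'I_n}) e : Fr \subset erased E w b -> e.1 \notin Fr ->
  (e \in saturate (forest_fF E w W b Fr)) = (e \in saturate (forest_f W b)).
Proof.
move=> sub eFr; rewrite /forest_fF !in_setU; congr (_ || _); rewrite ?inE.
apply/orP/idP => [[/andP[-> _] //|/imsetP [u uFr eu]]|ef]; last by left; rewrite ef.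
by move: eFr; rewrite eu erasing_edge_src ?(subsetP sub) // uFr.
Qed.

Lemma key_lt b (Fr : {set 'I_n}) : psi E w b = W -> Fr \subset erased E w b -> Fr != set0 ->
  key (forest_f W b) < key (forest_fF E w W b Fr).
Proof.
move=> pW sub FrN.
set a := saturate (forest_f W b); set a' := saturate (forest_fF E w W b Fr).
have Xb : explore E w b = run a N := run_saturate pW (leqnn _).
have FrEr : {subset Fr <= erased_seq (run a N)}.
  by move=> u /(subsetP sub); rewrite inE Xb.
have [k0 [e0 [L0 [k0N Lk0 e0Fr before]]]] := first_head_in FrN FrEr.
have [e0a e0Er] := erased_head_notin k0N Lk0 (FrEr _ e0Fr).
have e0a' : e0 \in a'.
  rewrite -(erasing_edge_explore (b := b) (_ : (e0.1, e0) \in _)) ?Xb //.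
  by rewrite !inE imset_f ?orbT.
have agree k : k <= k0 -> run a k = run a' k.
  apply: run_agree => i ik e L Li.
  by rewrite saturate_forest_fF //; apply: before ik Li.
apply: (nat_of_bits_map_lt k0N).
- move=> i ik; rewrite -(agree i (ltnW ik)) /head_kept.
  by case Li: stL => [|e L] //; rewrite saturate_forest_fF //; apply: before ik Li.
- by rewrite /head_kept Lk0 (negbTE e0a).
- by rewrite -(agree k0 (leqnn _)) /head_kept Lk0.
Qed.

Lemma forest_fF0 b : forest_fF E w W b set0 = forest_f W b.
Proof. by apply/setP => e; rewrite /forest_fF imset0 setU0 inE in_set0 andbT. Qed.

Lemma forest_fF_eq_f b (Fr : {set 'I_n}) : psi E w b = W -> Fr \subset erased E w b ->
  forest_fF E w W b Fr = forest_f W b -> Fr = set0.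
Proof.
move=> pW sub eqf; apply/eqP/contraT => FrN.
by have := key_lt pW sub FrN; rewrite eqf ltnn.
Qed.

Lemma nu_forest_f (R : numFieldType) b : psi E w b = W -> nu R E w W b (forest_f W b) = 1%R.
Proof.
move=> pW; rewrite /nu (big_pred1 set0) ?cards0 ?expr0 // => Fr /=.
apply/andP/eqP => [[sub /eqP]|->]; first exact: forest_fF_eq_f.
by rewrite sub0set forest_fF0.
Qed.

Lemma nu_eq0 (R : numFieldType) b f : psi E w b = W -> f != forest_f W b ->
  key f <= key (forest_f W b) -> nu R E w W b f = 0%R.
Proof.
move=> pW fb kf; rewrite /nu big_pred0 // => Fr; apply/andP => -[sub /eqP fFr].
have [Fr0|FrN] := eqVneq Fr set0; first by rewrite -fFr Fr0 forest_fF0 eqxx in fb.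
by have := key_lt pW sub FrN; rewrite fFr ltnNge kf.
Qed.

Lemma forest_f_inj b b' : spanning_tree E w b -> spanning_tree E w b' ->
  psi E w b = W -> psi E w b' = W -> forest_f W b = forest_f W b' -> b = b'.
Proof.
move=> sb sb' pb pb' ff.
have same_run k : k <= N -> run b k = run b' k.
  by move=> kN; rewrite (run_saturate pb kN) (run_saturate pb' kN) ff.
apply/setP => e; have [eW|eW] := boolP (e.1 \in W); last first.
  by move/setP/(_ e): ff; rewrite !inE eW !andbT.
have [ew|ew] := eqVneq e.1 w.
  rewrite (negbTE (outdeg0_notin (outdeg_root sb) ew)).
  by rewrite (negbTE (outdeg0_notin (outdeg_root sb') ew)).
have uN : e.1 \in stA (run b N) by rewrite (subsetP (psi_sub_stA b)) ?pb.
have u0 : e.1 \notin stA (run b 0) by rewrite inE.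
have [k [kN uk uk1]] := exists_switch (P := fun k => e.1 \in stA (run b k)) u0 uN.
have [e0 [L [Lk e0b e01]]] := xstep_enters uk uk1.
(* Both runs add e.1 to A at the same step k, via the same head edge. *)
have uk1' : e.1 \in stA (xstep b' (run b k)).
  by rewrite (same_run k (ltnW kN)) -runS -(same_run k.+1 kN).
have [e0' [L' [Lk' e0b' _]]] := xstep_enters uk uk1'.
move: Lk'; rewrite Lk => -[e0e0' _]; subst e0'.
rewrite (outdeg1_mem (outdeg_nonroot sb ew) e0b e01) //.
by rewrite (outdeg1_mem (outdeg_nonroot sb' ew) e0b' e01).
Qed.

End Exploration.

Theorem lemma4p5 (R : numFieldType) (n : nat) (E : rel 'I_n) (W : {set 'I_n}) (w : 'I_n) :
  irreflexive E ->
  strongly_connected E ->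
  strongly_connected_set E W ->
  w \in W ->
  forall c : {set 'I_n * 'I_n} -> R,
    (forall f : {set 'I_n * 'I_n}, rooted_forest E W f ->
       (\sum_(b : {set 'I_n * 'I_n} | spanning_tree E w b && (psi E w b == W))
          c b * nu R E w W b f)%R = 0%R) ->
    forall b : {set 'I_n * 'I_n}, spanning_tree E w b -> psi E w b = W -> c b = 0%R.
Proof.
move=> irrE _ _ wW c c_ind b0 sb0 pb0; apply/eqP/negPn/negP => cb0.
pose P b := [&& spanning_tree E w b, psi E w b == W & c b != 0%R].
have Pb0 : P b0 by rewrite /P sb0 pb0 eqxx.
have [b /and3P[sb /eqP pb cb] bmin] := arg_minnP (fun b => key E w W (forest_f W b)) Pb0.
have := c_ind _ (forest_f_rooted sb wW).
rewrite (bigD1 b) /=; last by rewrite sb pb eqxx.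
rewrite nu_forest_f // mulr1 big1 ?addr0 => [/eqP|b' /andP[/andP[sb' /eqP pb'] b'b]].
  by rewrite (negbTE cb).
have [->|cb'] := eqVneq (c b') 0%R; first by rewrite mul0r.
rewrite nu_eq0 ?mulr0 //; last by apply: bmin; rewrite /P sb' pb' eqxx.
by apply: contra_neq b'b => /esym/(forest_f_inj irrE sb' sb pb' pb).
Qed.
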